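(* Let $p,q\geq 2$ be relatively prime integers and $x,y,z,w,a\in A_{pq}$. If $f_{p,q}(x,a,y)=f_{p,q}(z,a,w)$, then $x\equiv z\pmod q$.
   Context: For an integer $n>1$, $A_n=\{0,1,\dots,n-1\}$. Define $g_{p,q}:A_{pq}\times A_{pq}\to A_{pq}$ by writing $x=x_1q+x_0$, $y=y_1q+y_0$ with $x_0,y_0\in A_q$, $x_1,y_1\in A_p$ (uniquely), and setting $g_{p,q}(x,y)=x_0p+y_1$. Define $f_{p,q}:A_{pq}^3\to A_{pq}$ by $f_{p,q}(x,a,y)=g_{p,q}(g_{p,q}(x,a),g_{p,q}(a,y))$. *)

From mathcomp Require Import all_boot.
Set Implicit Arguments. Unset Strict Implicit. Unset Printing Implicit Defensive.

(* A_n = {0,...,n-1} is represented by natural numbers below n (hypotheses x < p*q).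
   For x, y in A_{pq}: x = x1*q + x0 with x0 = x %% q < q and x1 = x %/ q < p. *)
Definition g (p q x y : nat) : nat := (x %% q) * p + y %/ q.

Definition f (p q x a y : nat) : nat := g p q (g p q x a) (g p q a y).

From mathcomp Require Import all_boot zify.

Set Implicit Arguments.
Unset Strict Implicit.

(* For y < pq we have y %/ q < p, so [g p q x y] is the base-p numeral with
   digits [x %% q] and [y %/ q]; dividing by p recovers [x %% q].  Hence
   [f p q x a y %/ p = (x %% q * p + a %/ q) %% q], the common a-part cancels
   modulo q, and so does the factor p, which is invertible modulo q. *)

Lemma eqn_modMr_coprime (k d m n : nat) :
  coprime d k -> (m * k == n * k %[mod d]) = (m == n %[mod d]).
Proof.
move=> co_dk; wlog le_nm : m n / n <= m.
  move=> IH; case: (leqP n m) => [/IH //|/ltnW /IH].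
  by rewrite eq_sym [X in _ = X]eq_sym.
by rewrite !eqn_mod_dvd ?leq_mul2r ?le_nm ?orbT // -mulnBl Gauss_dvdl.
Qed.

Lemma ltn_g (p q x y : nat) : y < p * q -> g p q x y < p * q.
Proof.
move=> lt_y; have q_gt0 : 0 < q by case: q lt_y => [|//]; rewrite muln0.
have lt_xq : x %% q < q by rewrite ltn_mod.
have lt_yq : y %/ q < p by rewrite ltn_divLR // mulnC.
rewrite /g; nia.
Qed.

Lemma g_divp (p q x y : nat) : 0 < p -> y < p * q -> g p q x y %/ p = x %% q.
Proof.
move=> p_gt0 lt_y; have q_gt0 : 0 < q by case: q lt_y => [|//]; rewrite muln0.
by rewrite /g divnMDl // divn_small ?addn0 // ltn_divLR // mulnC.
Qed.

Lemma f_divp (p q x a y : nat) :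
  0 < p -> y < p * q -> a < p * q -> f p q x a y %/ p = g p q x a %% q.
Proof. by move=> p_gt0 lt_y lt_a; rewrite /f g_divp ?ltn_g. Qed.

Lemma g_eq_mod (p q x z a : nat) : coprime p q ->
  g p q x a = g p q z a %[mod q] -> x = z %[mod q].
Proof.
rewrite coprime_sym => co_qp /eqP.
by rewrite /g eqn_modDr eqn_modMr_coprime // !modn_mod => /eqP.
Qed.

Theorem lemma4 (p q x y z w a : nat) :
  2 <= p -> 2 <= q -> coprime p q ->
  x < p * q -> y < p * q -> z < p * q -> w < p * q -> a < p * q ->
  f p q x a y = f p q z a w ->
  x = z %[mod q].
Proof.
move=> le2p _ co_pq _ lt_y _ lt_w lt_a /(congr1 (divn^~ p)).
have p_gt0 : 0 < p by apply: leq_trans le2p.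
by rewrite !f_divp // => /(g_eq_mod co_pq).
Qed.
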